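(* The map $\phi:\mathbf G\times\mathcal T\to\mathcal T$ defined, for $X=(A,\beta,B,Q_1,\dots,Q_n)\in\mathbf G$ and $\xi=(P_B,v_B,b_B,T,p_1,\dots,p_n)\in\mathcal T$, by $$\phi(X,\xi):=\Big(P_BP_A,\; v_B+R_Bv_A,\; b_B+\beta,\; P_A^{-1}TB,\; \big(P_BTB\,Q_i^{-1}\,T^{-1}P_B^{-1}(p_i)\big)_{i=1,\dots,n}\Big)$$ is a well-defined transitive right group action of $\mathbf G$ on $\mathcal T$.
   Context: Notation: $\mathrm{SE}(3)$ is the set of pairs $P=(R_P,x_P)$, $R_P\in\mathrm{SO}(3)$, $x_P\in\mathbb R^3$, product $(R_1,x_1)(R_2,x_2)=(R_1R_2,x_1+R_1x_2)$, acting on points by $P(p)=R_Pp+x_P$. $\mathrm{SE}_2(3)$ is the set of triples $A=(R_A,x_A,v_A)$, $R_A\in\mathrm{SO}(3)$, $x_A,v_A\in\mathbb R^3$, product $(R_1,x_1,v_1)(R_2,x_2,v_2)=(R_1R_2,x_1+R_1x_2,v_1+R_1v_2)$; write $P_A:=(R_A,x_A)\in\mathrm{SE}(3)$. $\mathrm{SOT}(3)$ is the group of pairs $Q=(R_Q,c_Q)$, $R_Q\in\mathrm{SO}(3)$, $c_Q>0$, product $(R_1R_2,c_1c_2)$, acting on points by $Q(p):=c_QR_Qp$ (so $Q^{-1}(p)=c_Q^{-1}R_Q^\top p$). Compositions such as $P_BTBQ_i^{-1}T^{-1}P_B^{-1}(p_i)$ mean successive application of these point actions. $\mathbf G:=\mathrm{SE}_2(3)\times\mathbb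 R^6\times\mathrm{SE}(3)\times\mathrm{SOT}(3)^n$ is the direct product group ($\mathbb R^6$ under addition), with elements $X=(A,\beta,B,Q_1,\dots,Q_n)$. State space: a state is $\xi=(P_B,v_B,b_B,T,p_1,\dots,p_n)$ with $P_B=(R_B,x_B)\in\mathrm{SE}(3)$, $v_B\in\mathbb R^3$, $b_B\in\mathbb R^6$, $T\in\mathrm{SE}(3)$, $p_i\in\mathbb R^3$; the total space $\mathcal T$ is the set of such states with $(P_BT)^{-1}(p_i)\ne0$ for all $i$. A right group action satisfies $\phi(XY,\xi)=\phi(Y,\phi(X,\xi))$, $\phi(\mathrm{id},\xi)=\xi$; transitive means every state can be mapped to every other. *)

From HB Require Import structures.
From mathcomp Require Import all_boot all_order all_algebra.
From mathcomp Require Import reals.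
Set Implicit Arguments. Unset Strict Implicit. Unset Printing Implicit Defensive.
Import Order.TTheory GRing.Theory Num.Theory.
Local Open Scope ring_scope.

Section Defs.
Variable R : realType.
Variable n : nat.

Definition vec3 := 'cV[R]_3.
Definition mat3 := 'M[R]_3.

Definition SO3 (M : mat3) : Prop := M^T *m M = 1%:M /\ \det M = 1.

Definition SE3 := (mat3 * vec3)%type.
Definition se3_mul (P1 P2 : SE3) : SE3 := (P1.1 *m P2.1, P1.2 + P1.1 *m P2.2).
Definition se3_inv (P : SE3) : SE3 := (P.1^T, - (P.1^T *m P.2)).
Definition se3_act (P : SE3) (p : vec3) : vec3 := P.1 *m p + P.2.
Definition se3_id : SE3 := (1%:M, 0).
Definition se3_mem (P : SE3) : Prop := SO3 P.1.

Definition SE23 := (mat3 * vec3 * vec3)%type.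
Definition se23_mul (A1 A2 : SE23) : SE23 :=
  (A1.1.1 *m A2.1.1, A1.1.2 + A1.1.1 *m A2.1.2, A1.2 + A1.1.1 *m A2.2).
Definition se23_id : SE23 := (1%:M, 0, 0).
Definition se23_P (A : SE23) : SE3 := (A.1.1, A.1.2).
Definition se23_mem (A : SE23) : Prop := SO3 A.1.1.

Definition SOT3 := (mat3 * R)%type.
Definition sot_mul (Q1 Q2 : SOT3) : SOT3 := (Q1.1 *m Q2.1, Q1.2 * Q2.2).
Definition sot_id : SOT3 := (1%:M, 1).
Definition sot_act (Q : SOT3) (p : vec3) : vec3 := Q.2 *: (Q.1 *m p).
Definition sot_inv_act (Q : SOT3) (p : vec3) : vec3 := Q.2^-1 *: (Q.1^T *m p).
Definition sot_mem (Q : SOT3) : Prop := SO3 Q.1 /\ 0 < Q.2.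

Record Gel := MkG {
  gA : SE23; gbeta : 'cV[R]_6; gB : SE3; gQ : {ffun 'I_n -> SOT3} }.
Definition G_mul (X Y : Gel) : Gel :=
  MkG (se23_mul (gA X) (gA Y)) (gbeta X + gbeta Y) (se3_mul (gB X) (gB Y))
      [ffun i => sot_mul (gQ X i) (gQ Y i)].
Definition G_id : Gel := MkG se23_id 0 se3_id [ffun _ => sot_id].
Definition G_mem (X : Gel) : Prop :=
  se23_mem (gA X) /\ se3_mem (gB X) /\ forall i, sot_mem (gQ X i).

Record State := MkS {
  sP : SE3; sv : vec3; sb : 'cV[R]_6; sT : SE3; sp : {ffun 'I_n -> vec3} }.

Definition T_mem (xi : State) : Prop :=
  se3_mem (sP xi) /\ se3_mem (sT xi) /\
  forall i, se3_act (se3_inv (se3_mul (sP xi) (sT xi))) (sp xi i) <> 0.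

Definition phi (X : Gel) (xi : State) : State :=
  let PA := se23_P (gA X) in
  MkS (se3_mul (sP xi) PA)
      (sv xi + (sP xi).1 *m (gA X).2)
      (sb xi + gbeta X)
      (se3_mul (se3_mul (se3_inv PA) (sT xi)) (gB X))
      [ffun i => se3_act (sP xi) (se3_act (sT xi) (se3_act (gB X)
                  (sot_inv_act (gQ X i)
                    (se3_act (se3_inv (sT xi)) (se3_act (se3_inv (sP xi)) (sp xi i))))))].

End Defs.

From HB Require Import structures.
From mathcomp Require Import all_boot all_order all_algebra.
From mathcomp Require Import reals ring.
Set Implicit Arguments. Unset Strict Implicit. Unset Printing Implicit Defensive.
Import Order.TTheory GRing.Theory Num.Theory.
Local Open Scope ring_scope.

(* Write F := P_B T for the camera frame of a state and c_i := F^-1(p_i) for the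
   body-frame coordinates of its landmarks.  The action multiplies F on the right
   by B and replaces c_i by Q_i^-1(c_i), so being well defined and satisfying the
   action axioms reduces to the group laws of SE(3) and SOT(3).  For transitivity,
   P_A, v_A, beta and B are forced, and Q_i must send c_i to c'_i: SOT(3) acts
   transitively on nonzero vectors, since once rescaled to the same length two
   vectors a, b are swapped by the half-turn about a + b (or about any axis
   orthogonal to a when b = -a). *)

Lemma det_sylvester (R : comNzRingType) m k (u : 'M[R]_(m, k)) (v : 'M[R]_(k, m)) :
  \det (1%:M - u *m v) = \det (1%:M - v *m u).
Proof.
have lhs : block_mx 1%:M u v 1%:M
    = block_mx (1%:M - u *m v) u 0 1%:M *m block_mx 1%:M 0 v 1%:M.
  rewrite mulmx_block !mulmx1 !mulmx0 !mul1mx.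
  by congr block_mx; rewrite ?add0r ?subrK; reflexivity.
have rhs : block_mx 1%:M u v 1%:M
    = block_mx 1%:M 0 v 1%:M *m block_mx 1%:M u 0 (1%:M - v *m u).
  rewrite mulmx_block !mulmx1 !mulmx0 !mul1mx !mul0mx.
  by congr block_mx; rewrite ?addr0 ?(addrC (v *m u)) ?subrK; reflexivity.
have := congr1 determinant (etrans (esym lhs) rhs).
by rewrite !det_mulmx !det_ublock det_lblock !det1 !mulr1 !mul1r => ->.
Qed.

Section Rotations.
Variables (R : realFieldType) (m : nat).
Implicit Types (u v w a b : 'cV[R]_m) (M N : 'M[R]_m).

Definition dot u v : R := (u^T *m v) 0 0.

Lemma mul_tr_dot u v : u^T *m v = (dot u v)%:M.
Proof. exact: mx11_scalar. Qed.

Lemma dotC u v : dot u v = dot v u.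
Proof. by rewrite /dot -[v^T *m u]trmxK trmx_mul !trmxK [in RHS]mxE. Qed.

Lemma dotDl u v w : dot (u + v) w = dot u w + dot v w.
Proof. by rewrite /dot linearD mulmxDl mxE. Qed.

Lemma dotDr u v w : dot u (v + w) = dot u v + dot u w.
Proof. by rewrite !(dotC u) dotDl. Qed.

Lemma dotZr (c : R) u v : dot u (c *: v) = c * dot u v.
Proof. by rewrite /dot -scalemxAr mxE. Qed.

Lemma dotZl (c : R) u v : dot (c *: u) v = c * dot u v.
Proof. by rewrite dotC dotZr dotC. Qed.

Lemma dot_gt0 u : u != 0 -> 0 < dot u u.
Proof.
move=> nz_u; have sq_ge0 i : 0 <= u^T 0 i * u i 0 by rewrite mxE -expr2 sqr_ge0.
rewrite lt_def /dot mxE sumr_ge0 // andbT; apply: contra nz_u => /eqP u0.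
apply/eqP/matrixP => i j; rewrite (ord1 j) mxE.
move: (psumr_eq0P (fun i _ => sq_ge0 i) u0) => /(_ i isT)/eqP.
by rewrite mxE -expr2 sqrf_eq0 => /eqP.
Qed.

Lemma orthogonal_exists u : (1 < m)%N -> exists2 w, w != 0 & dot w u = 0.
Proof.
move=> m_gt1; set K := kermx u.
have nzK : K != 0.
  by rewrite -mxrank_eq0 mxrank_ker subn_eq0 -ltnNge (leq_ltn_trans (rank_leq_col u)).
exists (nz_row K)^T; first by rewrite trmx_eq0 nz_row_eq0.
have [D ->] := submxP (nz_row_sub K).
by rewrite /dot trmxK -mulmxA mulmx_ker mulmx0 mxE.
Qed.

Definition is_rotation M : Prop := M^T *m M = 1%:M /\ \det M = 1.

Lemma rotation_mulmxT M : is_rotation M -> M *m M^T = 1%:M.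
Proof. by case=> /mulmx1C. Qed.

Lemma rotation_mul M N : is_rotation M -> is_rotation N -> is_rotation (M *m N).
Proof.
move=> [MM dM] [NN dN]; split; last by rewrite det_mulmx dM dN mulr1.
by rewrite trmx_mul mulmxA -(mulmxA N^T) MM mulmx1 NN.
Qed.

Lemma rotation_tr M : is_rotation M -> is_rotation M^T.
Proof.
by move=> rotM; rewrite /is_rotation trmxK det_tr rotation_mulmxT //; case: rotM.
Qed.

Definition halfturn w : 'M[R]_m := (2 / dot w w) *: (w *m w^T) - 1%:M.

Lemma halfturn_apply w a : halfturn w *m a = (2 * dot w a / dot w w) *: w - a.
Proof.
by rewrite mulmxBl mul1mx -scalemxAl -mulmxA mul_tr_dot mul_mx_scalar scalerA mulrAC.
Qed.

Lemma halfturn_axis w : w != 0 -> halfturn w *m w = w.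
Proof.
move=> nz_w; rewrite halfturn_apply mulfK ?gt_eqF ?dot_gt0 //.
by rewrite scaler_nat mulr2n addrK.
Qed.

Lemma trmx_halfturn w : (halfturn w)^T = halfturn w.
Proof. by rewrite /halfturn linearB linearZ /= trmx_mul trmxK trmx1. Qed.

Lemma halfturn_rotation w : odd m -> w != 0 -> is_rotation (halfturn w).
Proof.
move=> odd_m nz_w; have nz_ww : dot w w != 0 by rewrite gt_eqF ?dot_gt0.
split.
  rewrite trmx_halfturn {2}/halfturn mulmxBr mulmx1 -scalemxAr mulmxA halfturn_axis //.
  by rewrite /halfturn opprB addrC subrK.
have -> : halfturn w = - 1 *: (1%:M - ((2 / dot w w) *: w) *m w^T).
  by rewrite scaleN1r opprB /halfturn scalemxAl.
(* By Sylvester's identity, det (1 - c w w^T) = 1 - c |w|^2 = -1. *)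
rewrite detZ det_sylvester -scalemxAr mul_tr_dot scale_scalar_mx divfK //.
by rewrite det_mx11 !mxE /= -signr_odd odd_m; ring.
Qed.

Lemma rotation_exists a b : odd m -> (1 < m)%N -> dot a a = dot b b ->
  exists2 M, is_rotation M & M *m a = b.
Proof.
move=> odd_m m_gt1 eq_ab; have [ab0|nz_ab] := eqVneq (a + b) 0.
  have {ab0} -> : b = - a by apply/eqP; rewrite -addr_eq0 addrC ab0.
  have [w nz_w wa] := orthogonal_exists a m_gt1.
  exists (halfturn w); first exact: halfturn_rotation.
  by rewrite halfturn_apply wa mulr0 mul0r scale0r sub0r.
exists (halfturn (a + b)); first exact: halfturn_rotation.
have sq_ab : dot (a + b) (a + b) = 2 * dot (a + b) a.
  by rewrite !dotDl !dotDr (dotC a b) -eq_ab; ring.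
rewrite halfturn_apply sq_ab mulfV; first by rewrite scale1r addrC addKr.
by rewrite -sq_ab gt_eqF ?dot_gt0.
Qed.

End Rotations.

Lemma scaled_rotation_exists (R : rcfType) m (a b : 'cV[R]_m) :
  odd m -> (1 < m)%N -> a != 0 -> b != 0 ->
  exists M, exists2 c, is_rotation M /\ 0 < c & c *: (M *m a) = b.
Proof.
move=> odd_m m_gt1 nz_a nz_b; have aa_gt0 := dot_gt0 nz_a.
pose c := Num.sqrt (dot b b) / Num.sqrt (dot a a).
have c_gt0 : 0 < c by rewrite divr_gt0 ?sqrtr_gt0 ?dot_gt0.
have ca_ca : dot (c *: a) (c *: a) = dot b b.
  rewrite dotZl dotZr mulrA -expr2 expr_div_n !sqr_sqrtr ?ltW ?dot_gt0 //.
  by rewrite divfK ?gt_eqF.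
have [M rotM Mca] := rotation_exists odd_m m_gt1 ca_ca.
by exists M, c; rewrite // scalemxAr.
Qed.

Section SE3Group.
Variable R : realType.
Implicit Types (P Q S : SE3 R) (p : vec3 R).

Lemma se3_mulA P Q S : se3_mul (se3_mul P Q) S = se3_mul P (se3_mul Q S).
Proof. by rewrite /se3_mul /= mulmxA mulmxDr mulmxA addrA. Qed.

Lemma se3_id_mul P : se3_mul (se3_id R) P = P.
Proof. by case: P => M x; rewrite /se3_mul /= !mul1mx add0r. Qed.

Lemma se3_mul_id P : se3_mul P (se3_id R) = P.
Proof. by case: P => M x; rewrite /se3_mul /= mulmx1 mulmx0 addr0. Qed.

Lemma se3_mulV P : se3_mem P -> se3_mul P (se3_inv P) = se3_id R.
Proof.
move=> rotP; rewrite /se3_mul /= rotation_mulmxT // mulmxN mulmxA.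
by rewrite rotation_mulmxT // mul1mx subrr.
Qed.

Lemma se3_Vmul P : se3_mem P -> se3_mul (se3_inv P) P = se3_id R.
Proof. by case: P => M x [/= MM _]; rewrite /se3_mul /= MM addrC subrr. Qed.

Lemma se3_mulI P : se3_mem P -> injective (se3_mul P).
Proof.
move=> rotP Q S eq_PQS; rewrite -[Q]se3_id_mul -(se3_Vmul rotP) se3_mulA eq_PQS.
by rewrite -se3_mulA se3_Vmul // se3_id_mul.
Qed.

Lemma se3_invM P Q : se3_mem P ->
  se3_inv (se3_mul P Q) = se3_mul (se3_inv Q) (se3_inv P).
Proof.
case: P => M x [/= MM _]; rewrite /se3_inv /se3_mul /= trmx_mul mulmxDr opprD !mulmxN.
by rewrite !mulmxA -(mulmxA _ M^T M) MM mulmx1 addrC.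
Qed.

Lemma se3_inv_id : se3_inv (se3_id R) = se3_id R.
Proof. by rewrite /se3_inv /= trmx1 mul1mx oppr0. Qed.

Lemma se23_P_id : se23_P (se23_id R) = se3_id R.
Proof. by []. Qed.

Lemma se23_P_mul (A1 A2 : SE23 R) :
  se23_P (se23_mul A1 A2) = se3_mul (se23_P A1) (se23_P A2).
Proof. by []. Qed.

Lemma se3_mem_mul P Q : se3_mem P -> se3_mem Q -> se3_mem (se3_mul P Q).
Proof. exact: rotation_mul. Qed.

Lemma se3_mem_inv P : se3_mem P -> se3_mem (se3_inv P).
Proof. exact: rotation_tr. Qed.

Lemma se3_actM P Q p : se3_act (se3_mul P Q) p = se3_act P (se3_act Q p).
Proof. by rewrite /se3_act /= mulmxDr mulmxA addrA addrAC. Qed.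

Lemma se3_act_id p : se3_act (se3_id R) p = p.
Proof. by rewrite /se3_act mul1mx addr0. Qed.

Lemma se3_actK P : se3_mem P -> cancel (se3_act P) (se3_act (se3_inv P)).
Proof. by move=> rotP p; rewrite -se3_actM se3_Vmul // se3_act_id. Qed.

Lemma se3_actVK P : se3_mem P -> cancel (se3_act (se3_inv P)) (se3_act P).
Proof. by move=> rotP p; rewrite -se3_actM se3_mulV // se3_act_id. Qed.

Lemma sot_inv_actM (Q1 Q2 : SOT3 R) p :
  sot_inv_act (sot_mul Q1 Q2) p = sot_inv_act Q2 (sot_inv_act Q1 p).
Proof.
by rewrite /sot_inv_act /= -scalemxAr scalerA trmx_mul mulmxA invfM mulrC.
Qed.

Lemma sot_inv_act_id p : sot_inv_act (sot_id R) p = p.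
Proof. by rewrite /sot_inv_act /= invr1 scale1r trmx1 mul1mx. Qed.

Lemma sot_inv_act_eq0 (Q : SOT3 R) p :
  sot_mem Q -> (sot_inv_act Q p == 0) = (p == 0).
Proof.
case=> rotQ c_gt0; rewrite /sot_inv_act scaler_eq0 invr_eq0 gt_eqF //=.
apply/eqP/eqP => [|->]; last by rewrite mulmx0.
by move/(congr1 (mulmx Q.1)); rewrite mulmxA rotation_mulmxT // mul1mx mulmx0.
Qed.

Lemma sot_inv_act_exists (p q : vec3 R) : p != 0 -> q != 0 ->
  exists2 Q : SOT3 R, sot_mem Q & sot_inv_act Q p = q.
Proof.
move=> nz_p nz_q.
have [M [c [rotM c_gt0] eq_p]] := scaled_rotation_exists (m := 3) isT isT nz_q nz_p.
exists (M, c) => //; rewrite /sot_inv_act /= -eq_p -scalemxAr mulmxA.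
by case: rotM => -> _; rewrite mul1mx scalerA mulVf ?scale1r ?gt_eqF.
Qed.

End SE3Group.

Section Action.
Variables (R : realType) (n : nat).
Implicit Types (X Y : Gel R n) (xi : State R n).

Lemma state_ext xi xi' : sP xi = sP xi' -> sv xi = sv xi' -> sb xi = sb xi' ->
  sT xi = sT xi' -> sp xi =1 sp xi' -> xi = xi'.
Proof. by case: xi xi' => P v b T p [P' v' b' T' p'] /= -> -> -> -> /ffunP ->. Qed.

Definition frame xi : SE3 R := se3_mul (sP xi) (sT xi).

Definition coord xi (i : 'I_n) : vec3 R := se3_act (se3_inv (frame xi)) (sp xi i).

Lemma frame_mem xi : T_mem xi -> se3_mem (frame xi).
Proof. by case=> rotP [rotT _]; apply: se3_mem_mul. Qed.

Lemma sp_frame xi i : T_mem xi -> sp xi i = se3_act (frame xi) (coord xi i).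
Proof. by move=> /frame_mem rotF; rewrite se3_actVK. Qed.

Lemma frame_phi X xi : se3_mem (se23_P (gA X)) ->
  frame (phi X xi) = se3_mul (frame xi) (gB X).
Proof.
move=> rotA; rewrite /frame /= !se3_mulA -(se3_mulA (se23_P _)) se3_mulV //.
by rewrite se3_id_mul.
Qed.

Lemma sp_phi X xi i : se3_mem (sP xi) ->
  sp (phi X xi) i
  = se3_act (se3_mul (frame xi) (gB X)) (sot_inv_act (gQ X i) (coord xi i)).
Proof. by move=> rotP; rewrite ffunE /coord /frame se3_invM // !se3_actM. Qed.

Lemma coord_phi X xi i : G_mem X -> T_mem xi ->
  coord (phi X xi) i = sot_inv_act (gQ X i) (coord xi i).
Proof.
move=> [rotA [rotB _]] memxi; have rotF := frame_mem memxi.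
rewrite {1}/coord sp_phi ?frame_phi ?se3_actK //; [exact: se3_mem_mul | by case: memxi].
Qed.

Lemma phi_T_mem X xi : G_mem X -> T_mem xi -> T_mem (phi X xi).
Proof.
move=> memX memxi; have [rotA [rotB rotQ]] := memX; have [rotP [rotT nz_coord]] := memxi.
split; first exact: se3_mem_mul.
split; first by apply: se3_mem_mul => //; apply: se3_mem_mul => //; apply: se3_mem_inv.
move=> i; rewrite -/(coord _ i) coord_phi //; apply/eqP; rewrite sot_inv_act_eq0 //.
exact/eqP/nz_coord.
Qed.

Lemma phi_id xi : T_mem xi -> phi (G_id R n) xi = xi.
Proof.
move=> memxi; apply: state_ext; cbn [phi sP sv sb sT gA gB gbeta gQ G_id].
- exact: se3_mul_id.
- by rewrite mulmx0 addr0.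
- exact: addr0.
- by rewrite se23_P_id se3_inv_id se3_id_mul se3_mul_id.
move=> i; rewrite sp_phi; last by case: memxi.
by rewrite se3_mul_id ffunE sot_inv_act_id -sp_frame.
Qed.

Lemma phi_mul X Y xi : G_mem X -> G_mem Y -> T_mem xi ->
  phi (G_mul X Y) xi = phi Y (phi X xi).
Proof.
move=> memX memY memxi; have [rotA _] := memX; have [rotP _] := memxi.
apply: state_ext; cbn [phi sP sv sb sT gA gB gbeta gQ G_mul].
- by rewrite se23_P_mul se3_mulA.
- by rewrite mulmxDr mulmxA addrA.
- exact: addrA.
- by rewrite se23_P_mul se3_invM // !se3_mulA.
move=> i; rewrite sp_phi // sp_phi; last exact: se3_mem_mul.
by rewrite coord_phi // frame_phi // ffunE sot_inv_actM se3_mulA.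
Qed.

Lemma phi_transitive xi xi' : T_mem xi -> T_mem xi' ->
  exists X, G_mem X /\ phi X xi = xi'.
Proof.
move=> memxi memxi'; have [rotP [_ nz]] := memxi; have [rotP' [_ nz']] := memxi'.
have /fin_all_exists2 [Q rotQ eqQ] i :
    exists2 q, sot_mem q & sot_inv_act q (coord xi i) = coord xi' i.
  by apply: sot_inv_act_exists; apply/eqP; [apply: nz | apply: nz'].
pose PA := se3_mul (se3_inv (sP xi)) (sP xi').
pose B := se3_mul (se3_inv (frame xi)) (frame xi').
pose X := MkG (PA, (sP xi).1^T *m (sv xi' - sv xi)) (sb xi' - sb xi) B [ffun i => Q i].
have rotPA : se3_mem PA by apply: se3_mem_mul => //; apply: se3_mem_inv.
have rotB : se3_mem B.
  by apply: se3_mem_mul; [apply/se3_mem_inv/frame_mem | apply: frame_mem].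
have memX : G_mem X by split=> //; split=> // i; rewrite ffunE.
exists X; split=> //.
have sP_X : sP (phi X xi) = sP xi'.
  by rewrite [LHS]/= -se3_mulA se3_mulV // se3_id_mul.
have frame_X : frame (phi X xi) = frame xi'.
  by rewrite frame_phi // -se3_mulA se3_mulV ?se3_id_mul //; apply: frame_mem.
apply: state_ext => //; cbn [phi sv sb sT gA gB gbeta gQ].
- by rewrite mulmxA rotation_mulmxT // mul1mx addrC subrK.
- by rewrite addrC subrK.
- by apply: (se3_mulI rotP'); rewrite -[in LHS]sP_X; apply: frame_X.
move=> i; rewrite sp_phi // -frame_phi // frame_X ffunE eqQ.
exact/esym/sp_frame.
Qed.

End Action.

Theorem lemma2 (R : realType) (n : nat) :
  (forall (X : Gel R n) (xi : State R n),
      G_mem X -> T_mem xi -> T_mem (phi X xi)) /\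
  (forall xi : State R n, T_mem xi -> phi (G_id R n) xi = xi) /\
  (forall (X Y : Gel R n) (xi : State R n),
      G_mem X -> G_mem Y -> T_mem xi ->
      phi (G_mul X Y) xi = phi Y (phi X xi)) /\
  (forall xi xi' : State R n, T_mem xi -> T_mem xi' ->
      exists X : Gel R n, G_mem X /\ phi X xi = xi').
Proof.
split; first exact: phi_T_mem.
split; first exact: phi_id.
split; first exact: phi_mul.
exact: phi_transitive.
Qed.
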